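(* Let $(\mathfrak{A},\mathfrak{A}_0)$ be a CQ*-algebra as in the context and $X\in\mathfrak{A}$. Then $Eig(X)\subset\sigma^L_{\mathfrak{A}_0}(X)\subset\sigma_{\mathfrak{A}_0}(X)$.
   Context: Let $\mathfrak{A}_0$ be a unital C*-algebra with C*-norm $\|\cdot\|_0$ and unit $I$, and let $\|\cdot\|$ be another norm on $\mathfrak{A}_0$ with $\|A\|\le\|A\|_0$, $\|AB\|\le\|A\|\,\|B\|_0$, $\|A^*\|=\|A\|$. Let $\mathfrak{A}$ be the $\|\cdot\|$-completion of $\mathfrak{A}_0$; for $X\in\mathfrak{A}$, $A\in\mathfrak{A}_0$ and $A_n\to X$ in $\|\cdot\|$ ($A_n\in\mathfrak{A}_0$), $XA:=\lim A_nA$, $AX:=\lim AA_n$. $E(\mathfrak{A}_0)$ is the set of positive linear functionals $\omega$ on $\mathfrak{A}_0$ with $\omega(I)=1$ and $|\omega(A)|\le\gamma\|A\|$ for some $\gamma>0$; $\overline{\omega}$ is the continuous extension to $\mathfrak{A}$. $Eig(X)$ is the set of $\alpha\in\mathbb{C}$ for which there exists $\omega\in E(\mathfrak{A}_0)$ with $\overline{\omega}(AX)=\alpha\,\overline{\omega}(A)$ for all $A\in\mathfrak{A}_0$. $\sigma^L_{\mathfrak{A}_0}(X)$ (resp. $\sigma^R_{\mathfrak{A}_0}(X)$) is the set of $\alpha\in\mathbb{C}$ such that there is no $B\in\mathfrak{A}_0$ with $B(X-\alpha I)=I$ (resp. $(X-\alpha I)B=I$), and $\sigma_{\mathfrak{A}_0}(X)=\sigma^L_{\mathfrak{A}_0}(X)\cup\sigma^R_{\mathfrak{A}_0}(X)$.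 *)

From HB Require Import structures.
From mathcomp Require Import all_boot all_order all_algebra.
From mathcomp Require Import complex.
From mathcomp Require Import boolp classical_sets reals.
Set Implicit Arguments. Unset Strict Implicit. Unset Printing Implicit Defensive.
Import Order.TTheory GRing.Theory Num.Theory.
Local Open Scope ring_scope.
Local Open Scope complex_scope.

Section NormedNotions.
Variable R : realType.
Local Notation C := R[i].

Definition is_norm (V : lmodType C) (N : V -> R) :=
  [/\ forall x, 0 <= N x,
      forall x, N x = 0 -> x = 0,
      forall (a : C) x, N (a *: x) = ComplexField.Normc.normc a * N x &
      forall x y, N (x + y) <= N x + N y].

Definition ncvg (V : zmodType) (N : V -> R) (u : nat -> V) (l : V) :=
  forall e : R, 0 < e -> exists M, forall k, (M <= k)%N -> N (u k - l) < e.

Definition ncauchy (V : zmodType) (N : V -> R) (u : nat -> V) :=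
  forall e : R, 0 < e -> exists M, forall k l, (M <= k)%N -> (M <= l)%N ->
    N (u k - u l) < e.

Definition ncomplete (V : zmodType) (N : V -> R) :=
  forall u, ncauchy N u -> exists l, ncvg N u l.

End NormedNotions.

(* The data of the context: a unital C*-algebra (A0, ||.||_0) with involution
   star, a second norm ||.|| on A0 with the stated compatibility conditions,
   and the ||.||-completion A of A0, given by a linear isometric embedding
   j : A0 -> A with dense range into a complete normed space (A, nA). *)
Record CQstar (R : realType) := {
  A0 : algType R[i];
  star : A0 -> A0;
  n0 : A0 -> R;
  nrm : A0 -> R;
  A : lmodType R[i];
  nA : A -> R;
  j : A0 -> A;
  star_invol : forall a, star (star a) = a;
  star_add : forall a b, star (a + b) = star a + star b;
  star_scale : forall (c : R[i]) a, star (c *: a) = conjc c *: star a;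
  star_mul : forall a b, star (a * b) = star b * star a;
  n0_norm : is_norm n0;
  n0_submul : forall a b, n0 (a * b) <= n0 a * n0 b;
  n0_Cstar : forall a, n0 (star a * a) = n0 a ^+ 2;
  n0_complete : ncomplete n0;
  nrm_norm : is_norm nrm;
  nrm_le : forall a, nrm a <= n0 a;
  nrm_mul : forall a b, nrm (a * b) <= nrm a * n0 b;
  nrm_star : forall a, nrm (star a) = nrm a;
  nA_norm : is_norm nA;
  nA_complete : ncomplete nA;
  j_linear : forall (c : R[i]) a b, j (c *: a + b) = c *: j a + j b;
  j_isom : forall a, nA (j a) = nrm a;
  j_dense : forall X : A, exists u : nat -> A0, ncvg nA (fun k => j (u k)) X
}.

Section CQDefs.
Variable R : realType.
Variable Q : CQstar R.
Local Notation C := R[i].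
Local Notation A0 := (@A0 R Q).
Local Notation A := (@A R Q).
Local Notation j := (@j R Q).
Local Notation nA := (@nA R Q).

(* lmulA a X Y  <->  Y = a X, i.e. Y = lim a A_n whenever A_n -> X in ||.|| *)
Definition lmulA (a : A0) (X Y : A) :=
  forall u : nat -> A0, ncvg nA (fun k => j (u k)) X ->
    ncvg nA (fun k => j (a * u k)) Y.

(* rmulA X a Y  <->  Y = X a, i.e. Y = lim A_n a whenever A_n -> X *)
Definition rmulA (X : A) (a : A0) (Y : A) :=
  forall u : nat -> A0, ncvg nA (fun k => j (u k)) X ->
    ncvg nA (fun k => j (u k * a)) Y.

Definition in_E (w : A0 -> C) :=
  [/\ forall (c : C) a b, w (c *: a + b) = c * w a + w b,
      forall a, 0 <= w (@star R Q a * a),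
      w 1 = 1 &
      exists2 g : R, 0 < g & forall a, ComplexField.Normc.normc (w a) <= g * @nrm R Q a].

Definition is_cont_ext (w : A0 -> C) (wb : A -> C) :=
  [/\ forall (c : C) X Y, wb (c *: X + Y) = c * wb X + wb Y,
      exists g : R, forall X, ComplexField.Normc.normc (wb X) <= g * nA X &
      forall a, wb (j a) = w a].

Definition Eig (X : A) : set C :=
  [set alpha | exists w, in_E w /\ exists wb, is_cont_ext w wb /\
     forall (a : A0) (Y : A), lmulA a X Y -> wb Y = alpha * wb (j a)].

Definition sigmaL (X : A) : set C :=
  [set alpha | ~ exists B : A0, lmulA B (X - alpha *: j 1) (j 1)].

Definition sigmaR (X : A) : set C :=
  [set alpha | ~ exists B : A0, rmulA (X - alpha *: j 1) B (j 1)].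

Definition sigma (X : A) : set C := sigmaL X `|` sigmaR X.

End CQDefs.

From mathcomp Require Import all_boot all_order all_algebra.
From mathcomp Require Import complex.
From mathcomp Require Import boolp classical_sets reals.
Local Open Scope classical_set_scope.

Import GRing.Theory.

(* If B (X - alpha I) = I then B X = alpha B + I; applying the extension of an
   eigenfunctional w for alpha to both sides gives
   alpha w(B) = alpha w(B) + w(I), contradicting w(I) = 1. *)

Lemma ncvg_ext {R : realType} {V : zmodType} {N : V -> R} {u l v m} :
  ncvg N u l -> (forall k, (u k - l = v k - m)%R) -> ncvg N v m.
Proof.
move=> cvg_u eq_uv e e_gt0; have [M HM] := cvg_u e e_gt0.
by exists M => k le_Mk; rewrite -eq_uv; apply: HM.
Qed.

Section LeftMultiplication.
Variables (R : realType) (Q : CQstar R).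
Local Notation j := (@j R Q).
Local Notation nA := (@nA R Q).
Local Open Scope ring_scope.

Lemma jB a b : j (a - b) = j a - j b.
Proof. by have := j_linear (-1) b a; rewrite !scaleN1r addrC => ->; rewrite addrC. Qed.

Lemma j0 : j 0 = 0.
Proof. by rewrite -(subrr 0) jB subrr. Qed.

Lemma jZ c a : j (c *: a) = c *: j a.
Proof. by rewrite -[c *: a]addr0 j_linear j0 addr0. Qed.

Lemma lmulA_subZ1 (a : A0 Q) (X Y : A Q) (c : R[i]) :
  lmulA a (X - c *: j 1) Y -> lmulA a X (c *: j a + Y).
Proof.
move=> aXY u cvg_u.
have cvg_u1 : ncvg nA (fun k => j (u k - c *: 1)) (X - c *: j 1).
  by apply: (ncvg_ext cvg_u _) => k; rewrite jB jZ opprB addrA subrK.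
apply: (ncvg_ext (aXY _ cvg_u1) _) => k.
by rewrite mulrBr mulr_algr jB jZ opprD addrA.
Qed.

Lemma Eig_sub_sigmaL (X : A Q) : Eig X `<=` sigmaL X.
Proof.
move=> alpha [w [[_ _ w1 _] [wb [[wb_lin _ wb_ext] eig_w]]]] [B /lmulA_subZ1 BX].
have := eig_w _ _ BX; rewrite wb_lin !wb_ext w1 -[RHS]addr0.
by move/addrI/eqP; rewrite oner_eq0.
Qed.

End LeftMultiplication.

Theorem lemma4p4 (R : realType) (Q : CQstar R) (X : A Q) :
  Eig X `<=` sigmaL X /\ sigmaL X `<=` sigma X.
Proof. by split; [exact: Eig_sub_sigmaL | move=> alpha; left]. Qed.
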